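(* Let $F$ be a finite field of characteristic $3$. Let $k\ge 0$ be an integer, $m=3k+1$, and $t$ an integer with $t^3\equiv 1\pmod m$ and $\gcd(m,t-1)=1$. Let $G=T_{3m}=\langle x,y\mid x^m=y^3=1,\ y^{-1}xy=x^t\rangle$ (of order $3m$), $FG$ its group algebra, and $H=\langle x\rangle$. Then $\Delta(G)=J(FG)\oplus\Delta(G,H)$.
   Context: $J(FG)$ is the Jacobson radical of $FG$. $\Delta(G)$ is the augmentation ideal of $FG$, i.e. the ideal generated by $\{g-1\mid g\in G\}$, and $\Delta(G,H)$ is the ideal of $FG$ generated by $\{h-1\mid h\in H\}$ (with $H=\langle x\rangle$ normal in $G$). The sum is a direct sum of $F$-subspaces. *)

From HB Require Import structures.
From mathcomp Require Import all_boot all_algebra all_fingroup all_field.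
Set Implicit Arguments. Unset Strict Implicit. Unset Printing Implicit Defensive.
Import GRing.Theory.
Local Open Scope ring_scope.

(* The group algebra F G of the finite group G = [set: gT], realized as
   F-valued functions on gT; addition is pointwise, multiplication is
   convolution: (a * b)(g) = \sum_h a(h) b(h^-1 g). *)
Section GroupAlgebra.
Variables (F : finFieldType) (gT : finGroupType).

Definition galg := {ffun gT -> F}.

Definition gmul (a b : galg) : galg :=
  [ffun g => \sum_(h : gT) a h * b (h^-1 * g)%g].

Definition gelt (g : gT) : galg := [ffun h => (h == g)%:R].
Definition gone : galg := gelt 1%g.

Definition is_left_ideal (I : {set galg}) : Prop :=
  0 \in I /\ (forall a b, a \in I -> b \in I -> a + b \in I) /\
  (forall r a, a \in I -> gmul r a \in I).

Definition is_ideal (I : {set galg}) : Prop :=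
  is_left_ideal I /\ (forall r a, a \in I -> gmul a r \in I).

Definition is_maximal_left_ideal (I : {set galg}) : Prop :=
  is_left_ideal I /\ I != [set: galg] /\
  (forall I' : {set galg}, is_left_ideal I' -> I \subset I' ->
     I' = I \/ I' = [set: galg]).

Definition in_jacobson (a : galg) : Prop :=
  forall I, is_maximal_left_ideal I -> a \in I.

Definition in_ideal_gen (S : {set galg}) (a : galg) : Prop :=
  forall I, is_ideal I -> S \subset I -> a \in I.

Definition in_aug_ideal_rel (H : {set gT}) (a : galg) : Prop :=
  in_ideal_gen [set gelt h - gone | h in H] a.

Definition in_aug_ideal (a : galg) : Prop := in_aug_ideal_rel [set: gT] a.

End GroupAlgebra.

(* Let H = <[x]> and e = |H|^-1 * \sum_(h in H) h.  As |H| divides m = 3k+1,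
   it is invertible in F, so e is a central idempotent, Delta(G,H) is the
   annihilator of e, and every a in Delta(G) splits as a = a e + (a - a e).

   The summand a e lies in FG e, which is spanned by the y^j e; since it has
   augmentation 0 it is a multiple of (y - 1) e, and (y - 1)^3 = y^3 - 1 = 0 in
   characteristic 3.  Hence every left multiple of a e is nilpotent, and a e is
   in J(FG).

   Conversely J(FG) lies in Delta(G), and it meets Delta(G,H) trivially.  As
   C_G(h) = H for 1 != h in H, if X is a transversal of the G-classes in H^#
   then d = -|H|^-1 * \sum_(h in X) h satisfies \sum_g g d g^-1 = 1 - |H| e,
   which fixes Delta(G,H).  Averaging an F-linear projection onto a left ideal
   FG b of Delta(G,H) against d (Higman) gives an FG-linear one, so FG b is
   generated by an idempotent, which vanishes when b is in J(FG). *)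

From HB Require Import structures.
From mathcomp Require Import all_boot all_algebra all_fingroup all_field.
From mathcomp Require Import cyclic.
Import GRing.Theory.
Local Open Scope ring_scope.
Set Implicit Arguments. Unset Strict Implicit. Unset Printing Implicit Defensive.

Section GroupAlgebra.
Variables (F : finFieldType) (gT : finGroupType).

(* The product of [grpalg] is the convolution [gmul], not the pointwise product
   that [galg F gT] inherits from [{ffun gT -> F}]; hence the casts to [FG]
   below. *)
Definition grpalg : Type := galg F gT.
HB.instance Definition _ := GRing.Lmodule.copy grpalg {ffun gT -> F^o}.
HB.instance Definition _ := Vector.copy grpalg {ffun gT -> F^o}.
HB.instance Definition _ := Finite.copy grpalg {ffun gT -> F^o}.

Local Notation FG := grpalg.

Definition gelem (g : gT) : FG := gelt F g.

Lemma gelemE g h : gelem g h = (h == g)%:R.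
Proof. exact: ffunE. Qed.

Lemma gmulE (a b : FG) g : gmul a b g = \sum_h a h * b (h^-1 * g)%g.
Proof. exact: ffunE. Qed.

Lemma gmulA : associative (@gmul F gT : FG -> FG -> FG).
Proof.
move=> a b c; apply/ffunP=> g; rewrite !gmulE.
under eq_bigr do rewrite gmulE mulr_sumr.
under [RHS]eq_bigr do rewrite gmulE mulr_suml.
rewrite [RHS]exchange_big /=; apply: eq_bigr => k _.
rewrite [RHS](reindex_inj (mulgI k)) /=; apply: eq_bigr => h _.
by rewrite mulrA mulKg invMg mulgA.
Qed.

Lemma gmul_gelem_l g (a : FG) h : gmul (gelem g) a h = a (g^-1 * h)%g.
Proof.
rewrite gmulE (bigD1 g) //= gelemE eqxx mul1r big1 ?addr0 // => u /negbTE nu.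
by rewrite gelemE nu mul0r.
Qed.

Lemma gmul_gelem_r (a : FG) g h : gmul a (gelem g) h = a (h * g^-1)%g.
Proof.
rewrite gmulE (bigD1 (h * g^-1)%g) //= gelemE invMg invgK mulgKV eqxx.
rewrite mulr1 big1 ?addr0 // => u nu; rewrite gelemE.
case: eqP => [e|]; last by rewrite mulr0.
by move: nu; rewrite -e invMg invgK mulKVg eqxx.
Qed.

Lemma gmul1l : left_id (gone F gT : FG) (@gmul F gT).
Proof. by move=> a; apply/ffunP=> g; rewrite gmul_gelem_l invg1 mul1g. Qed.

Lemma gmul1r : right_id (gone F gT : FG) (@gmul F gT).
Proof. by move=> a; apply/ffunP=> g; rewrite gmul_gelem_r invg1 mulg1. Qed.

Lemma gmulDl : left_distributive (@gmul F gT : FG -> FG -> FG) +%R.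
Proof.
move=> a b c; apply/ffunP=> g; rewrite [in RHS]ffunE !gmulE -big_split /=.
by apply: eq_bigr => h _; rewrite ffunE mulrDl.
Qed.

Lemma gmulDr : right_distributive (@gmul F gT : FG -> FG -> FG) +%R.
Proof.
move=> a b c; apply/ffunP=> g; rewrite [in RHS]ffunE !gmulE -big_split /=.
by apply: eq_bigr => h _; rewrite ffunE mulrDr.
Qed.

Lemma gone_neq0 : (gone F gT : FG) != 0.
Proof. by apply/eqP=> /ffunP/(_ 1%g); rewrite gelemE ffunE eqxx; apply/eqP/oner_neq0. Qed.

HB.instance Definition _ :=
  GRing.Zmodule_isNzRing.Build FG gmulA gmul1l gmul1r gmulDl gmulDr gone_neq0.

Lemma gmulZl (c : F) (a b : FG) : c *: (a * b) = (c *: a) * b.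
Proof.
apply/ffunP=> g; rewrite [LHS]ffunE !gmulE -[LHS]/(c * _) mulr_sumr.
by apply: eq_bigr => h _; rewrite ffunE mulrA.
Qed.
HB.instance Definition _ := GRing.Lmodule_isLalgebra.Build F FG gmulZl.

Lemma gmulZr (c : F) (a b : FG) : c *: (a * b) = a * (c *: b).
Proof.
apply/ffunP=> g; rewrite [LHS]ffunE !gmulE -[LHS]/(c * _) mulr_sumr.
by apply: eq_bigr => h _; rewrite ffunE mulrCA.
Qed.
HB.instance Definition _ := GRing.Lalgebra_isAlgebra.Build F FG gmulZr.

Lemma gelem1 : gelem 1 = 1.
Proof. by []. Qed.

Lemma gelemM g h : gelem g * gelem h = gelem (g * h).
Proof.
apply/ffunP=> u; rewrite gmul_gelem_l !gelemE.
by congr (nat_of_bool _)%:R; apply/eqP/eqP=> [<-|->]; rewrite ?mulKVg ?mulKg.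
Qed.

Lemma gelemX g i : gelem g ^+ i = gelem (g ^+ i).
Proof. by elim: i => [|i IHi]; rewrite ?exprS ?IHi ?gelemM ?expgS. Qed.

Lemma grpalgZE c (a : FG) g : (c *: a) g = c * a g.
Proof. exact: ffunE. Qed.

Lemma grpalg_expand (a : FG) : a = \sum_g a g *: gelem g.
Proof.
apply/ffunP=> h; rewrite sum_ffunE (bigD1 h) //= big1 => [|u nu].
  by rewrite grpalgZE gelemE eqxx mulr1 addr0.
by rewrite grpalgZE gelemE eq_sym (negbTE nu) mulr0.
Qed.

Lemma central_gelem (z : FG) :
  (forall g, gelem g * z = z * gelem g) -> forall a, a * z = z * a.
Proof.
move=> zg a; rewrite (grpalg_expand a) mulr_suml mulr_sumr.
by apply: eq_bigr => g _; rewrite -scalerAl -scalerAr zg.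
Qed.

Definition aug (a : FG) : F := \sum_g a g.

Lemma aug_is_zmod_morphism : zmod_morphism aug.
Proof. by move=> a b; rewrite /aug -sumrB; apply: eq_bigr => g _; rewrite !ffunE. Qed.

Lemma augZ c a : aug (c *: a) = c * aug a.
Proof. by rewrite /aug mulr_sumr; apply: eq_bigr => g _; rewrite grpalgZE. Qed.

Lemma aug_gelem g : aug (gelem g) = 1.
Proof.
rewrite /aug (bigD1 g) //= gelemE eqxx big1 ?addr0 // => h /negbTE nh.
by rewrite gelemE nh.
Qed.

Lemma aug_gelemM g b : aug (gelem g * b) = aug b.
Proof.
rewrite /aug (reindex_inj (mulgI g)) /=.
by apply: eq_bigr => h _; rewrite gmul_gelem_l mulKg.
Qed.

HB.instance Definition _ := GRing.isZmodMorphism.Build FG F aug aug_is_zmod_morphism.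

Lemma aug_is_monoid_morphism : monoid_morphism aug.
Proof.
split=> [|a b]; first exact: aug_gelem.
rewrite {1}(grpalg_expand a) mulr_suml raddf_sum [aug a]/aug mulr_suml.
by apply: eq_bigr => g _ /=; rewrite -scalerAl augZ aug_gelemM.
Qed.

HB.instance Definition _ := GRing.isMonoidMorphism.Build FG F aug aug_is_monoid_morphism.

Lemma aug_scalar c : aug c%:A = c.
Proof. by rewrite augZ rmorph1 mulr1. Qed.

Lemma sum_gelemE (A : {set gT}) z : (\sum_(h in A) gelem h : FG) z = (z \in A)%:R.
Proof.
rewrite sum_ffunE; have [zA | zNA] := boolP (z \in A).
  rewrite (bigD1 z) //= gelemE eqxx big1 ?addr0 // => h /andP[_ hz].
  by rewrite gelemE eq_sym (negbTE hz).
by apply: big1 => h hA; rewrite gelemE; case: eqP => // zh; rewrite zh hA in zNA.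
Qed.

Lemma aug_horner_alg (a : FG) q : aug (horner_alg a q) = q.[aug a].
Proof.
elim/poly_ind: q => [|q c IHq]; first by rewrite !rmorph0 horner0.
rewrite rmorphD rmorphM /= horner_algX horner_algC rmorphD rmorphM /=.
by rewrite IHq aug_scalar hornerMXaddC.
Qed.

End GroupAlgebra.

Arguments gelem {F gT}.
Arguments aug {F gT}.

Section LeftIdeals.
Variables (F : finFieldType) (gT : finGroupType).
Local Notation FG := (grpalg F gT).
Implicit Types (I : {set galg F gT}) (a b r w : FG).

Lemma lideal0 I : is_left_ideal I -> (0 : FG) \in I.
Proof. by case. Qed.

Lemma lidealD I a b : is_left_ideal I -> a \in I -> b \in I -> a + b \in I.
Proof. by case=> _ [ID _]; apply: ID. Qed.

Lemma lidealMl I r a : is_left_ideal I -> a \in I -> r * a \in I.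
Proof. by case=> _ [_ IM]; apply: IM. Qed.

Lemma lideal_sum I (J : Type) (s : seq J) (P : pred J) (f : J -> FG) :
  is_left_ideal I -> (forall j, P j -> f j \in I) -> \sum_(j <- s | P j) f j \in I.
Proof.
move=> lI; apply: (big_ind (fun v : FG => v \in I)); first exact: lideal0.
by move=> a b; apply: lidealD.
Qed.

Lemma lideal1 I : is_left_ideal I -> (1 : FG) \in I -> I = [set: galg F gT].
Proof. by move=> lI I1; apply/setP=> a; rewrite inE; move: (lidealMl a lI I1); rewrite mulr1. Qed.

Definition lidealb I : bool :=
  [&& (0 : FG) \in I, [forall a in I, forall b in I, (a : FG) + b \in I]
    & [forall r : FG, forall a in I, r * a \in I]].

Lemma lidealbP I : reflect (is_left_ideal I) (lidealb I).
Proof.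
apply: (iffP and3P) => [[I0 ID IM] | [I0 [ID IM]]].
  split=> //; split=> [a b aI bI | r a aI].
    by move/forall_inP/(_ a aI)/forall_inP/(_ b bI): ID.
  by move/forallP/(_ r)/forall_inP/(_ a aI): IM.
split=> //.
  by apply/forall_inP=> a aI; apply/forall_inP=> b bI; apply: ID.
by apply/forallP=> r; apply/forall_inP=> a aI; apply: IM.
Qed.

Lemma maximal_lideal_exists I : is_left_ideal I -> (1 : FG) \notin I ->
  exists2 M, is_maximal_left_ideal M & I \subset M.
Proof.
move=> lI I1; pose P M := lidealb M && ((1 : FG) \notin M).
have PI : P I by rewrite /P I1 andbT; apply/lidealbP.
have [M maxM sIM] := maxset_exists PI.
have /andP[/lidealbP lM M1] := maxsetp maxM.
exists M => //; split=> //; split=> [|I' lI' sMI'].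
  by apply: contraNneq M1 => ->; rewrite inE.
have [I'1 | I'1] := boolP ((1 : FG) \in I'); first by right; apply: lideal1.
by left; apply: maxsetsup maxM _ sMI'; apply/andP; split=> //; apply/lidealbP.
Qed.

End LeftIdeals.

Section JacobsonRadical.
Variables (F : finFieldType) (gT : finGroupType).
Local Notation FG := (grpalg F gT).
Implicit Types (a r w : FG).

Lemma jacobson_left_unit w r : in_jacobson w -> exists s, s * (1 - r * w) = 1.
Proof.
move=> Jw; have [/existsP[s /eqP sw] | noinv] := boolP [exists s : FG, s * (1 - r * w) == 1].
  by exists s.
pose L : {set galg F gT} := [set s * (1 - r * w) | s : FG].
have lL : is_left_ideal L.
  split; first by apply/imsetP; exists 0; rewrite ?mul0r.
  split=> [_ _ /imsetP[s _ ->] /imsetP[s' _ ->] | r' _ /imsetP[s _ ->]].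
    by apply/imsetP; exists (s + s'); rewrite ?mulrDl.
  by apply/imsetP; exists ((r' : FG) * s); rewrite // -[gmul _ _]/((r' : FG) * _) mulrA.
have L1 : (1 : FG) \notin L.
  by apply: contra noinv => /imsetP[s _ s1]; apply/existsP; exists s; rewrite -s1.
have [M maxM sLM] := maximal_lideal_exists lL L1.
have [lM [MT _]] := maxM.
have rwM : r * w \in M by apply: lidealMl lM (Jw M maxM).
have wM1 : 1 - r * w \in M by apply: (subsetP sLM); apply/imsetP; exists 1; rewrite ?mul1r.
by case/negP: MT; rewrite -(lideal1 lM) // -(subrK (r * w) 1) lidealD.
Qed.

Lemma left_units_jacobson w :
  (forall r, exists s, s * (1 - r * w) = 1) -> in_jacobson w.
Proof.
move=> invw M [lM [MT maxM]]; apply/negPn/negP=> wM.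
pose L : {set galg F gT} := [set (m : FG) + s * w | m in M, s in [set: FG]].
have lL : is_left_ideal L.
  split; first by apply/imset2P; exists 0 0; rewrite ?inE ?lideal0 ?mul0r ?addr0.
  split=> [_ _ /imset2P[m s mM _ ->] /imset2P[m' s' m'M _ ->] | r _ /imset2P[m s mM _ ->]].
    apply/imset2P; exists ((m : FG) + m') (s + s'); rewrite ?inE ?lidealD //.
    by rewrite mulrDl addrACA.
  apply/imset2P; exists ((r : FG) * m) ((r : FG) * s); rewrite ?inE ?lidealMl //.
  by rewrite -[gmul _ _]/((r : FG) * _) mulrDr mulrA.
have sML : M \subset L.
  by apply/subsetP=> m mM; apply/imset2P; exists m 0; rewrite ?inE ?mul0r ?addr0.
have [LM | LT] := maxM L lL sML.
  case/negP: wM; rewrite -LM; apply/imset2P.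
  by exists 0 1; rewrite ?inE ?lideal0 ?mul1r ?add0r.
have /imset2P[m s mM _ m1] : (1 : FG) \in L by rewrite LT inE.
have [v vm] := invw s.
have mE : (m : FG) = 1 - s * w by rewrite m1 addrK.
by case/negP: MT; apply/eqP/(lideal1 lM); rewrite -vm -mE lidealMl.
Qed.

Lemma in_jacobsonP w :
  in_jacobson w <-> forall r, exists s, s * (1 - r * w) = 1.
Proof. by split=> [Jw r | ]; [apply: jacobson_left_unit | apply: left_units_jacobson]. Qed.

Lemma jacobson_mull r w : in_jacobson w -> in_jacobson (r * w).
Proof. by move/in_jacobsonP=> Jw; apply/in_jacobsonP=> r'; rewrite mulrA. Qed.

Lemma jacobson_idem w : in_jacobson w -> w * w = w -> w = 0.
Proof.
case/in_jacobsonP/(_ 1)=> s; rewrite mul1r => s1 ww.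
by rewrite -[w]mul1r -s1 -mulrA mulrBl mul1r ww subrr mulr0.
Qed.

Lemma jacobson_aug w : in_jacobson w -> aug w = 0.
Proof.
move/in_jacobsonP=> Jw; apply/eqP/contraT => aw.
have [s /(congr1 aug)] := Jw (aug w)^-1%:A.
rewrite rmorphM rmorphB rmorphM !rmorph1 /= aug_scalar mulVf // subrr mulr0.
by move/eqP; rewrite eq_sym oner_eq0.
Qed.

Lemma jacobson_nil w : (forall r, exists m, (r * w) ^+ m = 0) -> in_jacobson w.
Proof.
move=> nil_w; apply/in_jacobsonP=> r; have [m rw0] := nil_w r.
set x := r * w; exists (\sum_(i < m) x ^+ i).
have cx : GRing.comm (1 - x) x by apply/commr_sym/commrB; [apply: commr1 | apply: commr_refl].
have inv : (1 - x) * \sum_(i < m) x ^+ i = 1 by rewrite -opprB mulNr -subrX1 rw0 sub0r opprK.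
by rewrite -[RHS]inv; apply/commr_sym/commr_sum => i _; exact: commrX cx.
Qed.

End JacobsonRadical.

Section Ideals.
Variables (F : finFieldType) (gT : finGroupType).
Local Notation FG := (grpalg F gT).

Lemma is_ideal_kernel (R : pzRingType) (f : FG -> R) :
  f 0 = 0 -> {morph f : a b / a + b} -> {morph f : a b / a * b} ->
  is_ideal [set a : galg F gT | f a == 0].
Proof.
move=> f0 fD fM; split; first split; first by rewrite inE f0.
  split=> [a b | r a]; rewrite !inE.
    by move=> /eqP fa /eqP fb; rewrite fD fa fb addr0.
  by move=> /eqP fa; rewrite -[gmul r a]/((r : FG) * a) fM fa mulr0.
by move=> r a; rewrite !inE => /eqP fa; rewrite -[gmul a r]/((a : FG) * r) fM fa mul0r.
Qed.

Lemma in_ideal_gen_sum (S : {set galg F gT}) (J : Type) (s : seq J) (P : pred J)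
    (r u : J -> FG) :
  (forall j, P j -> u j \in S) -> in_ideal_gen S (\sum_(j <- s | P j) r j * u j).
Proof.
move=> uS I [lI _] sSI; apply: lideal_sum => // j Pj.
by apply: lidealMl => //; apply: (subsetP sSI); apply: uS.
Qed.

Lemma in_aug_idealP (a : FG) : in_aug_ideal a <-> aug a = 0.
Proof.
split=> [augIa | aug_a].
  have: a \in [set b : galg F gT | aug (b : FG) == 0]; last by rewrite inE => /eqP.
  apply: augIa; first by apply: is_ideal_kernel; [apply: rmorph0 | apply: rmorphD | apply: rmorphM].
  apply/subsetP=> _ /imsetP[g _ ->]; rewrite inE.
  by rewrite -[gelt F g - _]/(gelem g - 1) rmorphB /= aug_gelem rmorph1 subrr.
have -> : a = \sum_g (a g)%:A * (gelem g - 1).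
  under eq_bigr do rewrite mulrBr mulr1 mulr_algl.
  by rewrite sumrB -scaler_suml -[\sum_g a g]/(aug a) aug_a scale0r subr0 -grpalg_expand.
by apply: in_ideal_gen_sum => g _; apply/imsetP; exists g.
Qed.

End Ideals.

Section NormalSubgroupIdempotent.
Variables (F : finFieldType) (gT : finGroupType) (H : {group gT}).
Hypotheses (nH : ([set: gT] \subset 'N(H))%g) (H_unit : #|H|%:R != 0 :> F).
Local Notation FG := (grpalg F gT).

Definition subgroup_sum : FG := \sum_(h in H) gelem h.
Definition subgroup_idem : FG := #|H|%:R^-1 *: subgroup_sum.
Local Notation e := subgroup_idem.

Lemma subgroup_sumE : subgroup_sum = #|H|%:R *: e.
Proof. by rewrite /e scalerA divff // scale1r. Qed.

Lemma gelem_subgroup_sum h : h \in H -> gelem h * subgroup_sum = subgroup_sum.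
Proof.
move=> hH; rewrite mulr_sumr [RHS](reindex_inj (mulgI h)) /=.
by apply: eq_big => [u|u _]; [rewrite groupMl | rewrite gelemM].
Qed.

Lemma gelem_subgroup_idem h : h \in H -> gelem h * e = e.
Proof. by move=> hH; rewrite -scalerAr gelem_subgroup_sum. Qed.

Lemma subgroup_idem_central (a : FG) : a * e = e * a.
Proof.
apply: central_gelem => g; rewrite -scalerAr -scalerAl; congr (_ *: _).
rewrite mulr_sumr mulr_suml (reindex_inj (conjg_inj g)) /=.
apply: eq_big => [h | h _]; first by rewrite memJ_norm // (subsetP nH) ?inE.
by rewrite !gelemM conjgE mulKVg.
Qed.

Lemma subgroup_idem_idem : e * e = e.
Proof.
rewrite {1}/e -scalerAl /subgroup_sum mulr_suml.
rewrite (eq_bigr (fun=> e)) => [|h hH]; last exact: gelem_subgroup_idem.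
by rewrite sumr_const -scaler_nat scalerA mulVf // scale1r.
Qed.

Lemma mulr_subgroup_idem (a b : FG) : a * b * e = a * e * (b * e).
Proof.
rewrite -{1}subgroup_idem_idem !mulrA; congr (_ * _).
by rewrite -!mulrA subgroup_idem_central.
Qed.

Lemma aug_subgroup_idem : aug e = 1.
Proof.
rewrite augZ raddf_sum (eq_bigr (fun=> 1)) => [|h _]; last exact: aug_gelem.
by rewrite sumr_const mulVf.
Qed.

Lemma in_aug_ideal_relP (c : FG) : in_aug_ideal_rel H c <-> c * e = 0.
Proof.
split=> [augHc | ce0].
  have: c \in [set b : galg F gT | (b : FG) * e == 0]; last by rewrite inE => /eqP.
  apply: augHc.
    apply: (@is_ideal_kernel _ _ FG (fun b => b * e)) => [|a b|a b] /=.
    - exact: mul0r.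
    - exact: mulrDl.
    - exact: mulr_subgroup_idem.
  apply/subsetP=> _ /imsetP[h hH ->]; rewrite inE.
  by rewrite -[gelt F h - _]/(gelem h - 1) mulrBl gelem_subgroup_idem // mul1r subrr.
have -> : c = \sum_(h in H) (- #|H|%:R^-1 *: c) * (gelem h - 1).
  rewrite -mulr_sumr sumrB sumr_const -/subgroup_sum subgroup_sumE -scalerAl mulrBr.
  rewrite -scalerAr ce0 scaler0 sub0r scaleNr scalerN opprK mulr_natr -scaler_nat scalerA.
  by rewrite mulVf // scale1r.
by apply: in_ideal_gen_sum => h hH; apply/imsetP; exists h.
Qed.

End NormalSubgroupIdempotent.

Section GroupTrace.
Variables (F : finFieldType) (gT : finGroupType).
Local Notation FG := (grpalg F gT).

Definition gtrace (d : FG) : FG := \sum_g gelem g * d * gelem g^-1.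

Lemma gtrace_central d a : a * gtrace d = gtrace d * a.
Proof.
apply: central_gelem => h; rewrite mulr_sumr mulr_suml [RHS](reindex_inj (mulgI h)) /=.
by apply: eq_bigr => g _; rewrite !mulrA gelemM -[RHS]mulrA gelemM invMg mulgKV.
Qed.

Lemma gtraceZ c (d : FG) : gtrace (c *: d) = c *: gtrace d.
Proof. by rewrite scaler_sumr; apply: eq_bigr => g _; rewrite -scalerAr -scalerAl. Qed.

Section Projection.
Variables (b d : FG).

Definition left_mul_span : {vspace FG} := limg (linfun (b \o* idfun)).
Local Notation L := left_mul_span.

Lemma left_mul_spanP v : reflect (exists r, v = r * b) (v \in L).
Proof.
apply: (iffP memv_imgP) => [[r _ ->] | [r ->]]; first by exists r; rewrite lfunE.
by exists r; rewrite ?memvf // lfunE.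
Qed.

Lemma left_mul_span_mull r v : v \in L -> r * v \in L.
Proof. by case/left_mul_spanP=> s ->; apply/left_mul_spanP; exists (r * s); rewrite mulrA. Qed.

Definition trace_proj : 'End(FG) :=
  \sum_g (linfun ((gelem g * d) \*o idfun) \o projv L \o linfun (gelem g^-1 \*o idfun))%VF.

Lemma trace_projE v :
  trace_proj v = \sum_g gelem g * d * projv L (gelem g^-1 * v).
Proof. by rewrite sum_lfunE; apply: eq_bigr => g _; rewrite !comp_lfunE !lfunE. Qed.

Lemma trace_proj_gelem h v : trace_proj (gelem h * v) = gelem h * trace_proj v.
Proof.
rewrite !trace_projE mulr_sumr (reindex_inj (mulgI h)) /=; apply: eq_bigr => g _.
have -> : gelem (h * g)^-1 * (gelem h * v) = gelem g^-1 * v.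
  by rewrite mulrA gelemM invMg mulgKV.
by rewrite -gelemM !mulrA.
Qed.

Lemma trace_proj_mull r v : trace_proj (r * v) = r * trace_proj v.
Proof.
rewrite {1 2}(grpalg_expand r) !mulr_suml linear_sum; apply: eq_bigr => g _.
by rewrite -!scalerAl linearZ /= trace_proj_gelem.
Qed.

Lemma trace_proj_mem v : trace_proj v \in L.
Proof.
rewrite trace_projE; apply: memv_suml => g _.
by rewrite left_mul_span_mull ?memv_proj.
Qed.

Hypothesis db : gtrace d * b = b.

Lemma trace_proj_id v : v \in L -> trace_proj v = v.
Proof.
move=> vL; rewrite trace_projE.
under eq_bigr do rewrite projv_id ?left_mul_span_mull // mulrA.
case/left_mul_spanP: vL => s ->.
by rewrite -mulr_suml mulrA -gtrace_central -mulrA db.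
Qed.

End Projection.

Lemma jacobson_gtrace_eq0 (b d : FG) : in_jacobson b -> gtrace d * b = b -> b = 0.
Proof.
move=> Jb db; pose eps := trace_proj b d 1.
have eps_unit v : v \in left_mul_span b -> v = v * eps.
  by move=> vL; rewrite -{1}(trace_proj_id db vL) -[v in LHS]mulr1 trace_proj_mull.
have epsL : eps \in left_mul_span b := trace_proj_mem b d 1.
have eps0 : eps = 0.
  apply: jacobson_idem; last by rewrite -eps_unit.
  by case/left_mul_spanP: epsL => r ->; apply: jacobson_mull.
by rewrite (eps_unit b) ?eps0 ?mulr0 //; apply/left_mul_spanP; exists 1; rewrite mul1r.
Qed.

End GroupTrace.

Section CyclicQuotient.
Variables (F : finFieldType) (gT : finGroupType) (H : {group gT}) (y : gT) (p : nat).
Hypotheses (nH : ([set: gT] \subset 'N(H))%g) (H_unit : #|H|%:R != 0 :> F).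
Hypotheses (HyG : (H * <[y]>)%g = [set: gT]) (pF : p \in [pchar F]) (yp : (y ^+ p)%g = 1%g).
Local Notation FG := (grpalg F gT).
Local Notation e := (subgroup_idem F H).
Local Notation Y := (gelem y : FG).

Lemma mul_idem_horner (s : FG) : exists q, s * e = horner_alg Y q * e.
Proof.
rewrite (grpalg_expand s) mulr_suml.
apply: (big_ind (fun v => exists q, v = horner_alg Y q * e)).
- by exists 0; rewrite rmorph0 mul0r.
- by move=> _ _ [q1 ->] [q2 ->]; exists (q1 + q2); rewrite rmorphD mulrDl.
move=> g _; have /mulsgP[h _ hH /cycleP[j ->] ->] : g \in (H * <[y]>)%g by rewrite HyG inE.
exists ((s (h * y ^+ j)%g)%:P * 'X^j).
rewrite rmorphM /= horner_algC rmorphXn /= horner_algX mulr_algl -!scalerAl; congr (_ *: _).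
by rewrite -gelemM -gelemX -mulrA subgroup_idem_central // mulrA gelem_subgroup_idem.
Qed.

Lemma idem_aug0_nilpotent (w : FG) : aug w = 0 -> w * e = w -> w ^+ p = 0.
Proof.
move=> aug_w we; have [q wq] := mul_idem_horner w; rewrite we in wq.
have /factor_theorem[q' qE] : root q 1.
  by apply/rootP; rewrite -aug_w wq rmorphM /= aug_subgroup_idem // mulr1 aug_horner_alg aug_gelem.
have pFG : p \in [pchar FG] by rewrite (pchar_lalg FG).
have Y1p : (Y - 1) ^+ p = 0.
  rewrite -(pFrobenius_autE pFG) pFrobenius_autB_comm; last exact: commr1.
  by rewrite !pFrobenius_autE gelemX yp expr1n subrr.
rewrite wq exprMn_comm; last exact: subgroup_idem_central.
rewrite -rmorphXn qE exprMn rmorphM /= !rmorphXn /= rmorphB /= horner_algX polyC1 rmorph1.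
by rewrite Y1p mulr0 mul0r.
Qed.

Lemma jacobson_mul_idem (a : FG) : aug a = 0 -> in_jacobson (a * e).
Proof.
move=> aug_a; apply: jacobson_nil => r; exists p; apply: idem_aug0_nilpotent.
  by rewrite rmorphM /= rmorphM /= aug_a mul0r mulr0.
by rewrite -!mulrA subgroup_idem_idem.
Qed.

Lemma in_aug_ideal_jacobson_rel (a : FG) : in_aug_ideal a <->
  exists b c : FG, in_jacobson b /\ in_aug_ideal_rel H c /\ a = b + c.
Proof.
split=> [/in_aug_idealP aug_a | [b [c [Jb [/(in_aug_ideal_relP nH H_unit) ce ->]]]]].
  exists (a * e), (a - a * e); split; first exact: jacobson_mul_idem.
  split; last by rewrite addrC subrK.
  by apply/(in_aug_ideal_relP nH H_unit); rewrite mulrBl -mulrA subgroup_idem_idem // subrr.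
apply/in_aug_idealP; rewrite rmorphD /= jacobson_aug // add0r.
by have := congr1 aug ce; rewrite rmorphM /= aug_subgroup_idem // mulr1 rmorph0.
Qed.

End CyclicQuotient.

Lemma cent1_conjE (gT : finGroupType) (g h : gT) :
  (g \in 'C[h] = (h ^ g == h))%g.
Proof. by rewrite -astab1J; apply/astab1P/eqP. Qed.

Section SelfCentralizing.
Variables (F : finFieldType) (gT : finGroupType) (H : {group gT}).
Hypotheses (nH : ([set: gT] \subset 'N(H))%g) (H_unit : #|H|%:R != 0 :> F).
Hypothesis cH : {in H^#, forall h, 'C[h] = H}%g.
Local Notation FG := (grpalg F gT).

Definition class_transversal : {set gT} := orbit_transversal 'J [set: gT]%G H^#%g.
Local Notation X := class_transversal.

Lemma card_conj_transversal z :
  #|[set g | (z ^ g)%g \in X]| = ((z \in H^#%g) * #|H|)%N.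
Proof.
have actsX : [acts [set: gT], on H^#%g | 'J] by rewrite astabsJ normsD1.
have [_ sXH uniqX exX] := orbit_transversalP actsX.
have [zH | zNH] := boolP (z \in H^#%g); last first.
  apply/eqP; rewrite cards_eq0; apply/eqP/setP=> g; rewrite !inE.
  by apply: contraNF zNH => /(subsetP sXH); rewrite memJ_norm ?(subsetP (normsD1 nH)) ?inE.
have [g0 _ zg0X] := exX z zH.
suff -> : [set g | (z ^ g)%g \in X] = ('C[z] :* g0)%g by rewrite card_rcoset cH // mul1n.
apply/setP=> g; rewrite inE mem_rcoset cent1_conjE conjgM (canF_eq (conjgKV g0)).
apply/idP/eqP=> [zgX | ->] //; apply/esym/eqP; rewrite -(uniqX _ _ zg0X zgX).
by rewrite /= -(mulKVg g0 g) conjgM; apply: mem_orbit; rewrite inE.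
Qed.

Lemma gtrace_class_transversal :
  gtrace (\sum_(h in X) gelem h : FG) = #|H|%:R *: \sum_(h in H^#%g) gelem h.
Proof.
have conj_sum g : gelem g * (\sum_(h in X) gelem h) * gelem g^-1 =
    \sum_(h in (X :^ g^-1)%g) gelem h :> FG.
  rewrite mulr_sumr mulr_suml [RHS](reindex_inj (conjg_inj g^-1%g)) /=.
  apply: eq_big => h; first by rewrite memJ_conjg.
  by move=> _; rewrite !gelemM conjgE invgK mulgA.
rewrite /gtrace (eq_bigr _ (fun g _ => conj_sum g)); apply/ffunP=> z.
rewrite grpalgZE sum_gelemE -natrM mulnC -card_conj_transversal sum_ffunE.
rewrite -sum1_card natr_sum [RHS]big_mkcond /=; apply: eq_bigr => g _.
by rewrite sum_gelemE mem_conjgV inE; case: (_ \in X).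
Qed.

Lemma jacobson_aug_rel_eq0 (b : FG) : in_jacobson b -> in_aug_ideal_rel H b -> b = 0.
Proof.
move=> Jb /(in_aug_ideal_relP nH H_unit) be.
apply: (jacobson_gtrace_eq0 (d := - #|H|%:R^-1 *: \sum_(h in X) gelem h)) => //.
rewrite gtraceZ gtrace_class_transversal scalerA mulNr mulVf // scaleN1r mulNr.
have -> : \sum_(h in H^#%g) gelem h = subgroup_sum F H - 1 :> FG.
  by rewrite /subgroup_sum [in RHS](big_setD1 1%g) //= gelem1 addrC addrK.
rewrite mulrBl mul1r opprB subgroup_sumE // -scalerAl -subgroup_idem_central //.
by rewrite be scaler0 subr0.
Qed.

End SelfCentralizing.

Section Metacyclic.
Variables (gT : finGroupType) (k t : nat) (x y : gT).
Local Close Scope ring_scope.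
Local Open Scope group_scope.
Hypotheses (cop : coprime (3 * k + 1) (t - 1)) (gen : <<[set x; y]>> = [set: gT]).
Hypotheses (xm : x ^+ (3 * k + 1) = 1) (y3 : y ^+ 3 = 1) (xy : x ^ y = x ^+ t).

Lemma cycle_normal : [set: gT] \subset 'N(<[x]>).
Proof.
rewrite -gen gen_subG subUset !sub1set (subsetP (normG _)) ?cycle_id //=.
by rewrite inE -cycleJ xy cycle_subG mem_cycle.
Qed.

Lemma cycle_mul_cycle : <[x]> * <[y]> = [set: gT].
Proof.
rewrite -norm_joinEr ?cycle_subG ?(subsetP cycle_normal) ?inE //.
apply/eqP; rewrite eqEsubset subsetT -gen gen_subG subUset !sub1set.
by rewrite !mem_gen // inE cycle_id ?orbT.
Qed.

Lemma cycle_centralized_eq1 h : h \in <[x]> -> y \in 'C[h] -> h = 1.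
Proof.
move=> hx; rewrite cent1_conjE => /eqP hy.
have ht : h ^+ t = h by case/cycleP: hx hy => i ->; rewrite conjXg xy -!expgM mulnC.
have ht1 : h ^+ (t - 1) = 1.
  case: t ht => [|t'] ht; first by rewrite expg0.
  by apply: (mulIg h); rewrite subn1 -expgSr ht mul1g.
have hm : h ^+ (3 * k + 1) = 1 by case/cycleP: hx => i ->; rewrite -expgM mulnC expgM xm expg1n.
apply/eqP; rewrite -order_eq1 -dvdn1; move: cop; rewrite /coprime => /eqP <-.
by rewrite dvdn_gcd !order_dvdn hm ht1 eqxx.
Qed.

Lemma cent1_cycle h : h \in <[x]>^# -> 'C[h] = <[x]>.
Proof.
case/setD1P=> h1 hx; have sxC : <[x]> \subset 'C[h].
  by rewrite cycle_subG; case/cycleP: hx => i ->; apply/cent1P/commuteX.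
apply/eqP; rewrite eqEsubset sxC andbT; apply/subsetP=> g Cg.
have /mulsgP[h' u h'x /cycleP[j ->] gE] : g \in <[x]> * <[y]> by rewrite cycle_mul_cycle inE.
have yjC : y ^+ j \in 'C[h].
  by rewrite -(mulKg h' (y ^+ j)) -gE groupM ?groupV // (subsetP sxC).
rewrite gE groupMl //; have [j0 | jn0] := eqVneq (j %% 3) 0.
  by rewrite -(expg_mod _ y3) j0 group1.
(* Unless 3 divides j, j * j = 1 modulo 3, so y is a power of y ^+ j. *)
have yC : y \in 'C[h].
  have : y ^+ (j * j) \in 'C[h] by rewrite expgM groupX.
  by rewrite -(expg_mod _ y3) -modnMm; case: (j %% 3) jn0 (ltn_pmod j (isT : 0 < 3)) => [|[|[|]]].
by case/eqP: h1; apply: cycle_centralized_eq1.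
Qed.

Lemma order_cycle_dvd : #[x] %| 3 * k + 1.
Proof. by rewrite order_dvdn xm. Qed.

End Metacyclic.

Theorem proposition3p9 (F : finFieldType) (gT : finGroupType)
  (k t : nat) (x y : gT) :
  3%N \in [pchar F] ->
  (t ^ 3 = 1 %[mod 3 * k + 1])%N ->
  coprime (3 * k + 1) (t - 1) ->
  (* G = [set: gT] is T_{3m}, m = 3k+1, generated by x, y with the defining
     relations, of order 3m *)
  <<[set x; y]>>%g = [set: gT] ->
  (x ^+ (3 * k + 1))%g = 1%g ->
  (y ^+ 3)%g = 1%g ->
  (x ^ y)%g = (x ^+ t)%g ->
  #|gT| = (3 * (3 * k + 1))%N ->
  (forall a : galg F gT, in_aug_ideal a <->
     exists b c, in_jacobson b /\ in_aug_ideal_rel <[x]>%g c /\ a = b + c)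
  /\ (forall a : galg F gT, in_jacobson a -> in_aug_ideal_rel <[x]>%g a -> a = 0).
Proof.
move=> pF _ cop gen xm y3 xy _.
have nH := cycle_normal gen xy.
have H_unit : #|<[x]>%G|%:R != 0 :> F.
  rewrite -(dvdn_pcharf pF); apply/negP => /dvdn_trans/(_ (order_cycle_dvd xm)).
  by rewrite dvdn_addr ?dvdn_mulr.
split=> a; first exact: (in_aug_ideal_jacobson_rel nH H_unit (cycle_mul_cycle gen xy) pF y3).
exact: (jacobson_aug_rel_eq0 nH H_unit (cent1_cycle cop gen xm y3 xy)).
Qed.
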